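(* Let $(X,d,\mu)$ be geometrically doubling and upper doubling, with constants $N,n$ and dominating function $\lambda$ with constant $C_\lambda$, and fix $\varrho>1$. Let $\alpha,\beta\ge 2$ with $\beta>C_\lambda^{\log_2\alpha}$ and $\beta>\alpha^n$. For a ball $B$ let $B'$ denote the smallest ball of the form $\alpha^jB$, $j\in\mathbb{N}=\{0,1,\dots\}$, which is $(\alpha,\beta)$-doubling. Then there is a constant $C$ depending only on these parameters such that: if $f\in L^1_{\mathrm{loc}}(\mu)$, $A\ge0$ and numbers $(f_B)_B$ satisfy the $\mathrm{RBMO}(\mu)$ conditions with constant $A$, then $|f_B-f_{B'}|\le CA$ for every ball $B$. In particular $|f_B-f_{B'}|\le C\|f\|_{\mathrm{RBMO}}$ in this sense.
   Context: Balls $B=B(x,r)=\{y:d(y,x)<r\}$ have specified centre $c_B=x$ and radius $r_B=r>0$; $tB:=B(x,tr)$. Geometrically doubling with constants $N,n$: for every $\delta\in(0,1)$ every ball $B(x,r)$ contains at most $N\delta^{-n}$ centres of pairwise disjoint balls $B(y_j,\delta r)$. Upper doubling: $\mu$ is a Borel measure, finite on bounded sets, and $\lambda:X\times(0,\infty)\to(0,\infty)$ satisfies $r\mapsto\lambda(x,r)$ non-decreasing, $\lambda(x,2r)\le C_\lambda\lambda(x,r)$, $\mu(B(x,r))\le\lambda(x,r)$. A ball $B$ is $(\alpha,\beta)$-doubling if $\mu(\alpha B)\le\beta\mu(B)$ (such $B'$ exists for every ball). The $\mathrm{RBMO}(\mu)$ conditions with constant $A$ (parameter $\varrho$) on $f\in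 L^1_{\mathrm{loc}}(\mu)$ and numbers $f_B$ indexed by balls: $\frac{1}{\mu(\varrho B)}\int_B|f-f_B|\,d\mu\le A$ for all balls $B$, and $|f_B-f_{B_1}|\le A\{1+\int_{2B_1\setminus B}\frac{d\mu(x)}{\lambda(c_B,d(x,c_B))}\}$ whenever $B\subset B_1$. $\|f\|_{\mathrm{RBMO}}$ is the infimum of admissible $A$. *)

From HB Require Import structures.
From mathcomp Require Import all_boot all_order all_algebra.
From mathcomp Require Import all_classical all_reals all_analysis.
Set Implicit Arguments. Unset Strict Implicit. Unset Printing Implicit Defensive.
Import Order.TTheory GRing.Theory Num.Theory.
Local Open Scope classical_set_scope.
Local Open Scope ring_scope.

Definition oball {R : realType} {X : Type} (dist : X -> X -> R) (x : X) (r : R)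
  : set X := [set y | dist y x < r].

Definition is_metric {R : realType} {X : Type} (dist : X -> X -> R) : Prop :=
  [/\ forall x y, 0 <= dist x y,
      forall x y, dist x y = 0 <-> x = y,
      forall x y, dist x y = dist y x &
      forall x y z, dist x z <= dist x y + dist y z].

Definition geom_doubling {R : realType} {X : Type} (dist : X -> X -> R)
  (N n : R) : Prop :=
  forall (delta : R), 0 < delta < 1 ->
  forall (x : X) (r : R), 0 < r ->
  forall (k : nat) (y : 'I_k -> X),
    (forall i, oball dist x r (y i)) ->
    (forall i j, i != j -> oball dist (y i) (delta * r) `&` oball dist (y j) (delta * r) = set0) ->
    (k%:R <= N * powR delta (- n)).

Definition upper_doubling {R : realType} {d} {X : measurableType d}
  (dist : X -> X -> R) (mu : {measure set X -> \bar R})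
  (lam : X -> R -> R) (Clam : R) : Prop :=
  [/\ forall x r, 0 < r -> 0 < lam x r,
      forall x r s, 0 < r -> r <= s -> lam x r <= lam x s,
      forall x r, 0 < r -> lam x (2 * r) <= Clam * lam x r &
      forall x r, 0 < r -> (mu (oball dist x r) <= (lam x r)%:E)%E].

Definition doubling_ball {R : realType} {d} {X : measurableType d}
  (dist : X -> X -> R) (mu : {measure set X -> \bar R})
  (alpha beta : R) (x : X) (r : R) : Prop :=
  (mu (oball dist x (alpha * r)) <= beta%:E * mu (oball dist x r))%E.

Definition RBMO_cond {R : realType} {d} {X : measurableType d}
  (dist : X -> X -> R) (mu : {measure set X -> \bar R})
  (lam : X -> R -> R) (rho : R) (f : X -> R) (fB : X -> R -> R) (A : R) : Prop :=
  (forall x r, 0 < r ->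
     (\int[mu]_(z in oball dist x r) (`|f z - fB x r|)%:E
        <= A%:E * mu (oball dist x (rho * r)))%E)
  /\
  (forall x r y s, 0 < r -> 0 < s ->
     oball dist x r `<=` oball dist y s ->
     ((`|fB x r - fB y s|)%:E <=
        A%:E * (1 + \int[mu]_(z in oball dist y (2 * s) `\` oball dist x r)
                        ((lam x (dist z x))^-1)%:E))%E).

From HB Require Import structures.
From mathcomp Require Import all_boot all_order all_algebra.
From mathcomp Require Import all_classical all_reals all_analysis.
From mathcomp Require Import measurable_realfun.
From mathcomp Require Import ring.
Import Order.TTheory GRing.Theory Num.Theory.
Local Open Scope classical_set_scope.
Local Open Scope ring_scope.

(* Write B_i = B(x, alpha^i r) and M_i = mu(B_i). The balls B_0, ..., B_(j-1) are not
   doubling, so M_i grows by a factor beta at each step below j, which together with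
   M_(j+1) <= beta M_j gives beta^(j-i) M_(i+1) <= beta M_j <= beta lam(x, alpha^j r).
   Upper doubling yields lam(x, alpha^j r) <= C_lam rho^(j-i) lam(x, alpha^i r) with
   rho = C_lam^(log_2 alpha). Cutting 2B_j \ B into the annuli B_(i+1) \ B_i, on which
   lam(x, d(z,x)) >= lam(x, alpha^i r), the integral in the second RBMO condition is at most
   sum_i M_(i+1) / lam(x, alpha^i r) <= beta C_lam sum_i (rho/beta)^(j-i), a geometric sum
   bounded independently of j because rho < beta. *)

Lemma sum_expr_rev_le (R : realFieldType) (q : R) (j : nat) : 0 <= q -> q < 1 ->
  \sum_(i < j.+1) q ^+ (j - i) <= (1 - q)^-1.
Proof.
move=> q0 q1; have q1' : 0 < 1 - q by rewrite subr_gt0.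
rewrite (reindex_inj rev_ord_inj) /=.
have -> : \sum_(i < j.+1) q ^+ (j - rev_ord i) = \sum_(i < j.+1) q ^+ i.
  by apply: eq_bigr => i _; rewrite /= subSS subKn // -ltnS.
rewrite -[leRHS]mul1r ler_pdivlMr // mulrC -opprB mulNr -subrX1 opprB lerBlDr lerDl.
exact: exprn_ge0.
Qed.

Lemma exists_pow2_ge {R : realType} {alpha : R} (k : nat) : 1 <= alpha ->
  exists m : nat, alpha ^+ k <= 2 ^+ m /\ m%:R <= k%:R * (ln alpha / ln 2) + 1.
Proof.
move=> a1; have a0 : 0 < alpha by apply: lt_le_trans a1.
have ln2 : 0 < ln (2 : R) by rewrite ln_gt0 // ltr1n.
set t := k%:R * _; have t0 : 0 <= t.
  exact: mulr_ge0 (ler0n _ _) (divr_ge0 (ln_ge0 a1) (ltW ln2)).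
have [m tm mt] : exists2 m : nat, t <= m%:R & m%:R <= t + 1.
  exists (Num.truncn t).+1; last by rewrite -natr1 lerD2r truncn_le.
  by have /andP[_ /ltW] := truncn_itv t0.
exists m; split => //.
rewrite -ler_ln ?posrE ?exprn_gt0 // (lnXn _ a0) (lnXn _ (ltr0n _ 2)).

by rewrite -[leLHS]mulr_natl -[leRHS]mulr_natl -ler_pdivrMr // -mulrA.
Qed.

Lemma expr_chain_le (R : numDomainType) (M : nat -> R) (beta : R) (j : nat) :
  0 < beta -> (forall i, (i < j)%N -> beta * M i <= M i.+1) ->
  forall i, (i <= j)%N -> beta ^+ (j - i) * M i <= M j.
Proof.
move=> b0; elim: j => [|j IH] step i; first by rewrite leqn0 => /eqP ->; rewrite mul1r.
rewrite leq_eqVlt => /orP[/eqP -> | ]; first by rewrite subnn mul1r.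
rewrite ltnS => ij; rewrite subSn // exprS -mulrA (le_trans _ (step j _)) //.
by rewrite ler_pM2l // IH // => i' i'j; apply: step; apply: ltnW.
Qed.

Section doubling_function.
Context {R : realType} {lam : R -> R} {Clam : R}.
Hypothesis lam_gt0 : forall r, 0 < r -> 0 < lam r.
Hypothesis lam_le : forall r s, 0 < r -> r <= s -> lam r <= lam s.
Hypothesis lam_double : forall r, 0 < r -> lam (2 * r) <= Clam * lam r.

Lemma doubling_const_ge1 : 1 <= Clam.
Proof.
have l1 := lam_gt0 1 ltr01.
rewrite -(ler_pM2r l1) mul1r (le_trans _ (lam_double 1 ltr01)) //.
by apply: lam_le; rewrite ?mulr1 ?ler1n.
Qed.

Lemma lam_pow2_le (p : nat) (s : R) : 0 < s -> lam (2 ^+ p * s) <= Clam ^+ p * lam s.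
Proof.
move=> s0; elim: p => [|p IH]; first by rewrite !expr0 !mul1r.
rewrite exprS -mulrA (le_trans (lam_double _ _)) ?mulr_gt0 ?exprn_gt0 //.
by rewrite exprS -mulrA ler_wpM2l // (le_trans ler01 doubling_const_ge1).
Qed.

Lemma lam_expr_le (alpha : R) (k : nat) (s : R) : 1 <= alpha -> 0 < s ->
  lam (alpha ^+ k * s) <= Clam * powR Clam (ln alpha / ln 2) ^+ k * lam s.
Proof.
move=> a1 s0; have C1 := doubling_const_ge1; have C0 := le_trans ler01 C1.
have [m [akm mk]] := exists_pow2_ge k a1; set u := ln alpha / ln 2 in mk *.
have a0 : 0 < alpha by apply: lt_le_trans a1.
have aks : 0 < alpha ^+ k * s by rewrite mulr_gt0 ?exprn_gt0.
apply: (le_trans (lam_le _ _ aks (ler_wpM2r (ltW s0) akm))).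
apply: (le_trans (lam_pow2_le m _ s0)); rewrite ler_wpM2r ?(ltW (lam_gt0 _ s0)) //.
rewrite -powR_mulrn // (le_trans (ler_powR C1 mk)) // powRD; last first.
  by apply/implyP => _; rewrite gt_eqF // (lt_le_trans ltr01).
by rewrite powRr1 // [leLHS]mulrC (mulrC k%:R) powRrM powR_mulrn ?powR_ge0.
Qed.

Lemma sum_ratio_le (alpha beta r : R) (M : nat -> R) (j : nat) :
  1 <= alpha -> 0 < r -> powR Clam (ln alpha / ln 2) < beta ->
  (forall i, (i < j)%N -> beta * M i <= M i.+1) -> M j.+1 <= beta * M j ->
  M j <= lam (alpha ^+ j * r) ->
  \sum_(i < j.+1) M i.+1 / lam (alpha ^+ i * r) <=
    beta * Clam / (1 - powR Clam (ln alpha / ln 2) / beta).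
Proof.
set rho := powR Clam _ => a1 r0 rho_beta growM doubleMj Mj_lam.
have b0 : 0 < beta by apply: le_lt_trans rho_beta; apply: powR_ge0.
have C0 := le_trans ler01 doubling_const_ge1.
set q := rho / beta.
have ar i : 0 < alpha ^+ i * r by rewrite mulr_gt0 ?exprn_gt0 // (lt_le_trans ltr01).
have term i : (i <= j)%N -> M i.+1 / lam (alpha ^+ i * r) <= beta * Clam * q ^+ (j - i).
  move=> ij; have li := lam_gt0 _ (ar i).
  have chain : beta ^+ (j - i) * M i.+1 <= beta * M j.
    move: ij; rewrite leq_eqVlt => /orP[/eqP -> | ij]; first by rewrite subnn mul1r.
    by rewrite -(subnSK ij) exprS -mulrA ler_pM2l // expr_chain_le.
  have grow : M j <= Clam * rho ^+ (j - i) * lam (alpha ^+ i * r).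
    rewrite (le_trans Mj_lam) // -(subnK ij) exprD -mulrA addnK.
    exact: lam_expr_le.
  rewrite ler_pdivrMr // -(ler_pM2l (exprn_gt0 (j - i) b0)) (le_trans chain) //.
  have -> : beta ^+ (j - i) * (beta * Clam * q ^+ (j - i) * lam (alpha ^+ i * r)) =
            beta * (Clam * rho ^+ (j - i) * lam (alpha ^+ i * r)).
    by rewrite /q expr_div_n; field; rewrite expf_neq0 // gt_eqF.
  by rewrite ler_pM2l.
apply: (@le_trans _ _ (\sum_(i < j.+1) beta * Clam * q ^+ (j - i))).
  by apply: ler_sum => i _; apply/term/leq_ord.
rewrite -mulr_sumr ler_wpM2l ?mulr_ge0 ?(ltW b0) // sum_expr_rev_le //.
  by rewrite divr_ge0 ?powR_ge0 ?(ltW b0).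
by rewrite ltr_pdivrMr // mul1r.
Qed.

End doubling_function.

Lemma inv_le_sum_layers {R : realType} {ell : R -> R} {alpha r t : R} {j : nat} :
  (forall s, 0 < s -> 0 < ell s) -> (forall s u, 0 < s -> s <= u -> ell s <= ell u) ->
  0 < alpha -> 0 < r -> r <= t -> t < alpha ^+ j.+1 * r ->
  (ell t)^-1 <= \sum_(i < j.+1) (ell (alpha ^+ i * r))^-1 * (t < alpha ^+ i.+1 * r)%R%:R.
Proof.
move=> ell_gt0 ell_le a0 r0 rt tj.
have air i : 0 < alpha ^+ i * r by rewrite mulr_gt0 ?exprn_gt0.
have [i ti i_min] := ex_minnP (ex_intro (fun i => t < alpha ^+ i.+1 * r) j tj).
have ij : (i < j.+1)%N by rewrite ltnS i_min.
have it : alpha ^+ i * r <= t.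
  case: i ti i_min {ij} => [|i] ti i_min; first by rewrite mul1r.
  by rewrite leNgt; apply/negP => /i_min; rewrite ltnn.
rewrite (bigD1 (Ordinal ij)) //= ti mulr1; apply: ler_wpDr.
  by apply: sumr_ge0 => k _; rewrite mulr_ge0 // invr_ge0 ltW ?ell_gt0.
by rewrite lef_pV2 ?posrE ?ell_gt0 ?ell_le // (lt_le_trans _ it).
Qed.

Section integral_bounds.
Local Open Scope ereal_scope.
Context {d : measure_display} {T : measurableType d} {R : realType}.
Variable mu : {measure set T -> \bar R}.

(* No measurability is required: the nonnegative integral is a supremum over the simple
   functions below the integrand, and the integrand of the RBMO condition is not known to
   be measurable. *)

Lemma ge0_le_integral_nonmeas (D : set T) (f g : T -> \bar R) :
  (forall x, D x -> 0 <= f x) -> (forall x, D x -> f x <= g x) ->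
  \int[mu]_(x in D) f x <= \int[mu]_(x in D) g x.
Proof.
move=> f0 fg; have g0 x : D x -> 0 <= g x by move=> Dx; exact: le_trans (f0 x Dx) (fg x Dx).
rewrite (ge0_integralE _ f0) (ge0_integralE _ g0).
apply: ereal_sup_le => _ [h /= hf <-]; exists h => //= x.
apply: (le_trans (hf x)); rewrite /patch; case: ifP => // /set_mem Dx; exact: fg.
Qed.

Lemma integral_sum_indic_le (D : set T) (A : nat -> set T) (c : nat -> R) (n : nat) :
  measurable D -> (forall i, measurable (A i)) -> (forall i, (0 <= c i)%R) ->
  \int[mu]_(z in D) (\sum_(i < n) (c i)%:E * (\1_(A i) z)%:E)
    <= \sum_(i < n) (c i)%:E * mu (A i).
Proof.
move=> mD mA c0.
rewrite ge0_integral_sum //; last 2 first.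
- by move=> i; apply: measurable_funeM; exact/measurable_EFinP/measurable_indic.
- by move=> i z _; rewrite mule_ge0 // lee_fin.
apply: lee_sum => i _.
rewrite ge0_integralZl_EFin //; last exact/measurable_EFinP/measurable_indic.
by rewrite integral_indic // lee_wpmul2l ?lee_fin // measureIl.
Qed.

End integral_bounds.

Section annulus.
Local Open Scope ereal_scope.
Context {d : measure_display} {X : measurableType d} {R : realType}.
Variables (dist : X -> X -> R) (mu : {measure set X -> \bar R}).

Lemma integral_inv_annulus_le {ell : R -> R} {x : X} {alpha r : R} {j : nat} :
  (forall s, measurable (oball dist x s)) ->
  (forall s, (0 < s)%R -> (0 < ell s)%R) ->
  (forall s u, (0 < s)%R -> (s <= u)%R -> (ell s <= ell u)%R) ->
  (2 <= alpha)%R -> (0 < r)%R ->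
  \int[mu]_(z in oball dist x (2 * (alpha ^+ j * r)) `\` oball dist x r)
      ((ell (dist z x))^-1)%:E
    <= \sum_(i < j.+1)
         ((ell (alpha ^+ i * r))^-1)%:E * mu (oball dist x (alpha ^+ i.+1 * r)).
Proof.
move=> mball ell_gt0 ell_le a2 r0; have a0 : (0 < alpha)%R by apply: lt_le_trans a2.
have c0 i : (0 <= (ell (alpha ^+ i * r))^-1)%R.
  by rewrite invr_ge0 ltW // ell_gt0 // mulr_gt0 ?exprn_gt0.
apply: le_trans _ (integral_sum_indic_le mu _ (fun i => oball dist x (alpha ^+ i.+1 * r))
  _ j.+1 (measurableD (mball _) (mball _)) (fun i => mball _) c0).
apply: ge0_le_integral_nonmeas => z [zj /negP]; rewrite -leNgt => rz.
  by rewrite lee_fin invr_ge0 ltW // ell_gt0 // (lt_le_trans r0).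
have zj1 : (dist z x < alpha ^+ j.+1 * r)%R.
  by rewrite (lt_le_trans zj) // exprS -mulrA ler_pM2r // mulr_gt0 ?exprn_gt0.
rewrite sumEFin lee_fin (le_trans (inv_le_sum_layers ell_gt0 ell_le a0 r0 rz zj1)) //.
apply: ler_sum => i _; rewrite indicE.
by case: (boolP (dist z x < _)%R) => zi; [rewrite mem_set | rewrite memNset //; apply/negP].
Qed.

End annulus.

Theorem lemma5p1 (R : realType) (N n Clam rho alpha beta : R) :
  1 < rho -> 2 <= alpha -> 2 <= beta ->
  powR Clam (ln alpha / ln 2) < beta -> powR alpha n < beta ->
  exists C : R,
  forall (d : measure_display) (X : measurableType d) (dist : X -> X -> R)
         (mu : {measure set X -> \bar R}) (lam : X -> R -> R),
    is_metric dist ->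
    (forall x r, measurable (oball dist x r)) ->
    (forall x r, (mu (oball dist x r) < +oo)%E) ->
    geom_doubling dist N n ->
    upper_doubling dist mu lam Clam ->
  forall (f : X -> R) (fB : X -> R -> R) (A : R),
    (forall x r, 0 < r -> mu.-integrable (oball dist x r) (EFin \o f)) ->
    0 <= A ->
    RBMO_cond dist mu lam rho f fB A ->
  forall (x : X) (r : R) (j : nat), 0 < r ->
    doubling_ball dist mu alpha beta x (alpha ^+ j * r) ->
    (forall i, (i < j)%N -> ~ doubling_ball dist mu alpha beta x (alpha ^+ i * r)) ->
    `|fB x r - fB x (alpha ^+ j * r)| <= C * A.
Proof.
move=> _ a2 _ rho_beta _.
exists (1 + beta * Clam / (1 - powR Clam (ln alpha / ln 2) / beta)).
move=> d X dist mu lam _ mball mfin _ [lam_gt0 lam_le lam_double mu_le] f fB A _ A0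
  [_ fB_le] x r j r0 doubling_j not_doubling.
have a1 : 1 <= alpha by apply: le_trans a2; rewrite ler1n.
have ar k : 0 < alpha ^+ k * r by rewrite mulr_gt0 ?exprn_gt0 // (lt_le_trans ltr01).
pose M k := fine (mu (oball dist x (alpha ^+ k * r))).
have muE k : mu (oball dist x (alpha ^+ k * r)) = (M k)%:E by rewrite fineK // ge0_fin_numE.
have growM i : (i < j)%N -> beta * M i <= M i.+1.
  move/not_doubling; rewrite /doubling_ball mulrA -exprS !muE -EFinM lee_fin.
  by move/negP; rewrite -ltNge => /ltW.
have doubleMj : M j.+1 <= beta * M j.
  by move: doubling_j; rewrite /doubling_ball mulrA -exprS !muE -EFinM lee_fin.
have Mj_lam : M j <= lam x (alpha ^+ j * r) by rewrite -lee_fin -muE mu_le.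
have sub : oball dist x r `<=` oball dist x (alpha ^+ j * r).
  by move=> z /lt_le_trans; apply; rewrite ler_peMl ?(ltW r0) ?exprn_ege1.
rewrite -lee_fin (le_trans (fB_le _ _ _ _ r0 (ar j) sub)) // (mulrC _ A) EFinM.
rewrite lee_wpmul2l ?lee_fin // EFinD leeD //.
apply: le_trans (integral_inv_annulus_le dist mu (mball x) (lam_gt0 x) (lam_le x) a2 r0) _.
under eq_bigr do rewrite muE -EFinM mulrC.
rewrite sumEFin lee_fin.
by apply: (sum_ratio_le (lam_gt0 x) (lam_le x) (lam_double x)).
Qed.
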